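(* Let $\omega\in\{0,\infty\}$ and let $f,g:(0,\infty)\to(0,\infty)$ be such that (1) $f$ is nondecreasing; (2) $g$ is $\rho$-regularly varying at $\omega$ for some $\rho>0$, i.e. $\lim_{t\to\omega}g(tx)/g(t)=x^\rho$ for all $x>0$; (3) $\lim_{x\to\omega}f(x)/g(x)=\alpha\in[0,\infty)$. If $M_n\to\omega$ and $u_n\to u\in[0,\infty)$ (with $M_n,u_n>0$), then $\lim_{n\to\infty}f(M_nu_n)/g(M_n)=\alpha u^\rho$. *)

From Stdlib Require Import Reals.
From Coquelicot Require Import Coquelicot.
Open Scope R_scope.

Inductive Omega := OmZero | OmInfty.

(* The filter "t -> omega" for t ranging in (0, +oo):
   right neighbourhoods of 0, resp. neighbourhoods of +oo. *)
Definition om_filter (w : Omega) : (R -> Prop) -> Prop :=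
  match w with
  | OmZero => at_right 0
  | OmInfty => Rbar_locally p_infty
  end.

Global Instance om_filter_proper (w : Omega) : ProperFilter (om_filter w).
Proof.
  destruct w; simpl.
  - apply at_right_proper_filter.
  - apply Rbar_locally_filter.
Qed.

(* x^r for x >= 0 (with the convention 0^r = 0, relevant for r > 0);
   Stdlib's Rpower 0 r would be 1, which is wrong. *)
Definition rpow (x r : R) : R :=
  if Rlt_dec 0 x then Rpower x r else 0.

(* Write [x_n = f (M_n u_n) / g (M_n)].  For a fixed scale [c > 0],
   [f (M_n c) / g (M_n) = f (M_n c) / g (M_n c) * g (M_n c) / g (M_n)]
   tends to [alpha c^rho], since [M_n c] still tends to omega.  As [f] is
   nondecreasing, [x_n] is squeezed between the values at the scales
   [c < u] and [c > u], and [alpha c^rho] is continuous in [c].  When [u = 0]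
   there is no scale below [u], but then the limit is [0] and [x_n > 0]. *)
From Stdlib Require Import Reals Lra.
From Coquelicot Require Import Coquelicot.
Open Scope R_scope.

Lemma rpow0 (r : R) : rpow 0 r = 0.
Proof. unfold rpow. destruct (Rlt_dec 0 0); [lra | easy]. Qed.

Lemma continuous_rpow (rho x : R) : 0 < rho -> continuous (fun y => rpow y rho) x.
Proof.
  intros Hrho.
  destruct (Rtotal_order x 0) as [Hx | [-> | Hx]].
  - apply continuous_ext_loc with (g := fun _ => 0); [|apply continuous_const].
    apply locally_interval with (a := m_infty) (b := Finite 0); [easy | easy |].
    intros y _ Hy. unfold rpow. destruct (Rlt_dec 0 y); simpl in Hy; [lra | easy].
  - apply filterlim_locally. intros eps.
    assert (Hdelta : 0 < Rpower eps (/ rho)) by apply exp_pos.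
    exists (mkposreal _ Hdelta). intros y Hy.
    change (Rabs (y - 0) < Rpower eps (/ rho)) in Hy.
    change (Rabs (rpow y rho - rpow 0 rho) < eps).
    assert (Heps := cond_pos eps).
    rewrite rpow0, Rminus_0_r. unfold rpow.
    destruct (Rlt_dec 0 y) as [Hy0|_]; [|rewrite Rabs_R0; lra].
    rewrite Rminus_0_r, Rabs_pos_eq in Hy by lra.
    rewrite Rabs_pos_eq by (left; apply exp_pos).
    replace (pos eps) with (Rpower (Rpower eps (/ rho)) rho)
      by (rewrite Rpower_mult, Rinv_l by lra; apply Rpower_1, Heps).
    apply Rlt_Rpower_l; lra.
  - apply continuous_ext_loc with (g := fun y => Rpower y rho).
    + apply locally_interval with (a := Finite 0) (b := p_infty); [easy | easy |].
      intros y Hy _. unfold rpow. destruct (Rlt_dec 0 y); simpl in Hy; [easy | lra].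
    + apply continuity_pt_filterlim, derivable_continuous_pt.
      eexists. apply derivable_pt_lim_power, Hx.
Qed.

Lemma filterlim_mulr_om_filter (w : Omega) (c : R) : 0 < c ->
  filterlim (fun t => t * c) (om_filter w) (om_filter w).
Proof.
  intros Hc P HP. destruct w; simpl in *.
  - destruct HP as [e He].
    assert (He' : 0 < e / c) by (apply Rdiv_lt_0_compat; [apply cond_pos | lra]).
    exists (mkposreal _ He'). intros t Ht Ht0. apply He; [|nra].
    change (Rabs (t * c - 0) < e). change (Rabs (t - 0) < e / c) in Ht.
    rewrite Rminus_0_r, Rabs_pos_eq in * by nra.
    apply Rmult_lt_compat_r with (r := c) in Ht; [|lra].
    unfold Rdiv in Ht. rewrite Rmult_assoc, Rinv_l, Rmult_1_r in Ht; lra.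
  - destruct HP as [N HN]. exists (N / c). intros t Ht. apply HN.
    apply Rmult_lt_compat_r with (r := c) in Ht; [|lra].
    unfold Rdiv in Ht. rewrite Rmult_assoc, Rinv_l, Rmult_1_r in Ht; lra.
Qed.

Section RegularVariation.

Variables (w : Omega) (f g : R -> R) (rho alpha : R).
Hypothesis g_pos : forall x, 0 < x -> 0 < g x.
Hypothesis g_regular : forall x, 0 < x ->
  filterlim (fun t => g (t * x) / g t) (om_filter w) (locally (rpow x rho)).
Hypothesis f_over_g : filterlim (fun x => f x / g x) (om_filter w) (locally alpha).

Lemma is_lim_seq_ratio_scaled (M : nat -> R) (c : R) :
  (forall n, 0 < M n) -> filterlim M eventually (om_filter w) -> 0 < c ->
  is_lim_seq (fun n => f (M n * c) / g (M n)) (alpha * rpow c rho).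
Proof.
  intros HMpos HM Hc.
  apply is_lim_seq_ext with
    (u := fun n => f (M n * c) / g (M n * c) * (g (M n * c) / g (M n))).
  - intros n. assert (0 < g (M n * c)) by (apply g_pos; specialize (HMpos n); nra).
    assert (0 < g (M n)) by auto. field; lra.
  - apply is_lim_seq_mult'.
    + apply (filterlim_comp _ _ _ (fun n => M n * c) (fun x => f x / g x)
               _ (om_filter w) _); [| exact f_over_g].
      exact (filterlim_comp _ _ _ _ _ _ _ _ HM (filterlim_mulr_om_filter w c Hc)).
    + exact (filterlim_comp _ _ _ _ (fun t => g (t * c) / g t) _ _ _ HM (g_regular c Hc)).
Qed.

End RegularVariation.

Lemma is_lim_seq_eventually_lt (v : nat -> R) (l b : R) :
  is_lim_seq v l -> l < b -> eventually (fun n => v n < b).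
Proof.
  intros Hv Hlb. assert (Hd : 0 < b - l) by lra.
  apply (is_lim_seq_spec v l) in Hv.
  generalize (Hv (mkposreal _ Hd)). apply filter_imp. simpl.
  intros n Hn. apply Rabs_def2 in Hn. lra.
Qed.

Lemma is_lim_seq_eventually_gt (v : nat -> R) (l a : R) :
  is_lim_seq v l -> a < l -> eventually (fun n => a < v n).
Proof.
  intros Hv Hal. assert (Hd : 0 < l - a) by lra.
  apply (is_lim_seq_spec v l) in Hv.
  generalize (Hv (mkposreal _ Hd)). apply filter_imp. simpl.
  intros n Hn. apply Rabs_def2 in Hn. lra.
Qed.

Section MonotoneFamily.

Variables (F : nat -> R -> R) (phi : R -> R) (u : nat -> R) (u0 : R).
Hypothesis F_mono : forall n c c', 0 < c -> c <= c' -> F n c <= F n c'.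
Hypothesis F_lim : forall c, 0 < c -> is_lim_seq (fun n => F n c) (phi c).
Hypothesis phi_cont : continuous phi u0.
Hypothesis u_pos : forall n, 0 < u n.
Hypothesis u_lim : is_lim_seq u u0.

Let phi_near (eps : posreal) :
  exists delta : posreal, forall c,
    Rabs (c - u0) < delta -> phi c < phi u0 + eps /\ phi u0 - eps < phi c.
Proof.
  destruct (proj1 (filterlim_locally _ _) phi_cont eps) as [delta Hdelta].
  exists delta. intros c Hc. specialize (Hdelta c Hc).
  change (Rabs (phi c - phi u0) < eps) in Hdelta. apply Rabs_def2 in Hdelta. lra.
Qed.

Lemma monotone_family_eventually_lt (eps : posreal) :
  0 <= u0 -> eventually (fun n => F n (u n) < phi u0 + eps).
Proof.
  intros Hu0. destruct (phi_near (pos_div_2 eps)) as [delta Hdelta].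
  set (c := u0 + delta / 2).
  assert (Hdpos := cond_pos delta). assert (Hepos := cond_pos eps).
  assert (Hc : phi c < phi u0 + eps / 2).
  { apply Hdelta. unfold c. rewrite Rabs_pos_eq; lra. }
  assert (Hc0 : 0 < c) by (unfold c; lra).
  assert (HFc := is_lim_seq_eventually_lt _ _ (phi u0 + eps) (F_lim c Hc0) ltac:(lra)).
  assert (Huc := is_lim_seq_eventually_lt _ _ c u_lim ltac:(unfold c; lra)).
  generalize (filter_and _ _ HFc Huc). apply filter_imp. intros n [HF Hu].
  eapply Rle_lt_trans; [apply F_mono; [apply u_pos | left; exact Hu] | exact HF].
Qed.

Lemma monotone_family_eventually_gt (eps : posreal) :
  0 < u0 -> eventually (fun n => phi u0 - eps < F n (u n)).
Proof.
  intros Hu0. destruct (phi_near (pos_div_2 eps)) as [delta Hdelta].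
  set (c := Rmax (u0 / 2) (u0 - delta / 2)).
  assert (Hdpos := cond_pos delta). assert (Hepos := cond_pos eps).
  assert (Hc0 : 0 < c) by (apply Rlt_le_trans with (u0 / 2); [lra | apply Rmax_l]).
  assert (Hcu : c < u0) by (apply Rmax_lub_lt; lra).
  assert (Hc : phi u0 - eps / 2 < phi c).
  { apply Hdelta. rewrite Rabs_left by lra.
    assert (u0 - delta / 2 <= c) by apply Rmax_r. lra. }
  assert (HFc := is_lim_seq_eventually_gt _ _ (phi u0 - eps) (F_lim c Hc0) ltac:(lra)).
  assert (Huc := is_lim_seq_eventually_gt _ _ c u_lim Hcu).
  generalize (filter_and _ _ HFc Huc). apply filter_imp. intros n [HF Hu].
  eapply Rlt_le_trans; [exact HF | apply F_mono; [exact Hc0 | left; exact Hu]].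
Qed.

End MonotoneFamily.

Lemma is_lim_seq_of_eventually_bounds (x : nat -> R) (l : R) :
  (forall eps : posreal, eventually (fun n => x n < l + eps)) ->
  (forall eps : posreal, eventually (fun n => l - eps < x n)) ->
  is_lim_seq x l.
Proof.
  intros Hup Hlo. apply is_lim_seq_spec. intros eps.
  generalize (filter_and _ _ (Hup eps) (Hlo eps)). apply filter_imp.
  intros n [H1 H2]. apply Rabs_def1; lra.
Qed.

Theorem lemmaB2 (w : Omega) (f g : R -> R) (rho alpha : R)
  (Hfpos : forall x, 0 < x -> 0 < f x)
  (Hgpos : forall x, 0 < x -> 0 < g x)
  (Hfmono : forall x y, 0 < x -> x <= y -> f x <= f y)
  (Hrho : 0 < rho)
  (Hreg : forall x, 0 < x ->
     filterlim (fun t => g (t * x) / g t) (om_filter w) (locally (rpow x rho)))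
  (Halpha : 0 <= alpha)
  (Hfg : filterlim (fun x => f x / g x) (om_filter w) (locally alpha))
  (M u : nat -> R) (u0 : R)
  (HMpos : forall n, 0 < M n) (Hupos : forall n, 0 < u n)
  (HM : filterlim M eventually (om_filter w))
  (Hu0 : 0 <= u0)
  (Hu : is_lim_seq u u0) :
  is_lim_seq (fun n => f (M n * u n) / g (M n)) (alpha * rpow u0 rho).
Proof.
  set (F n c := f (M n * c) / g (M n)).
  set (phi c := alpha * rpow c rho).
  assert (F_mono : forall n c c', 0 < c -> c <= c' -> F n c <= F n c').
  { intros n c c' Hc Hcc'. specialize (HMpos n). unfold F, Rdiv.
    apply Rmult_le_compat_r; [left; apply Rinv_0_lt_compat, Hgpos, HMpos |].
    apply Hfmono; nra. }
  assert (F_lim : forall c, 0 < c -> is_lim_seq (fun n => F n c) (phi c))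
    by exact (fun c => is_lim_seq_ratio_scaled w f g rho alpha Hgpos Hreg Hfg M c HMpos HM).
  assert (phi_cont : continuous phi u0)
    by (apply (continuous_scal_r alpha (fun c => rpow c rho)), continuous_rpow, Hrho).
  change (is_lim_seq (fun n => F n (u n)) (phi u0)).
  apply is_lim_seq_of_eventually_bounds; intros eps.
  - now apply monotone_family_eventually_lt.
  - destruct Hu0 as [Hu0 | <-]; [now apply monotone_family_eventually_gt |].
    apply filter_forall. intros n.
    assert (0 < F n (u n)).
    { specialize (HMpos n). specialize (Hupos n).
      apply Rdiv_lt_0_compat; [apply Hfpos; nra | apply Hgpos, HMpos]. }
    unfold phi. rewrite rpow0, Rmult_0_r. generalize (cond_pos eps). lra.
Qed.
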